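(* Let $\Sigma$ be a finite totally ordered alphabet, $\$$ a symbol smaller than all letters of $\Sigma$, and let $W \in \Sigma^+$ be given together with its Lyndon factorization $W = L_1 L_2 \cdots L_k$. There is an algorithm (called Bwt_Lynd) that proceeds in $k$ iterations, where iteration $i$ ($1 \le i \le k$) computes $bwt(L_1 \cdots L_i\$)$ from $bwt(L_1\cdots L_{i-1}\$)$ (by computing $bwt(L_i\$)$ and the suffix array of $L_i\$$, computing for each suffix of $L_i\$$ the number of suffixes of $L_1\cdots L_{i-1}\$$ lexicographically smaller than it using $C$ and $rank$ queries on $bwt(L_1\cdots L_{i-1}\$)$ supported in constant time, and merging), such that at the end of iteration $k$ it has correctly computed $bwt(L_1\cdots L_k\$) = bwt(W\$)$, each iteration $i$ runs in $O(\sum_{j=1}^{i} |L_j|)$ time, and the overall running time is $O(k^2 M)$, where $M = \max_{1\le i\le k} |L_i|$.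
   Context: A Lyndon word is a nonempty primitive word strictly smaller (lexicographically) than all its other cyclic shifts; the Lyndon factorization of $W$ is the unique factorization $W = L_1\cdots L_k$ into Lyndon words with $L_1 \ge \cdots \ge L_k$. For $Y \in \Sigma^*$, $bwt(Y\$)$ is obtained by sorting all suffixes of $Y\$$ lexicographically and listing, for each suffix in this order, the symbol cyclically preceding it in $Y\$$; the suffix array of $Y\$$ lists the starting positions of its suffixes in lexicographic order. For a word $u$ and symbol $x$, $C(u,x)$ is the number of symbols of $u$ smaller than $x$, and $rank(u,x,t)$ is the number of occurrences of $x$ in $u[1,t]$. *)

(* Words are sequences of natural numbers.
   Convention: the end-marker $ is the symbol 0; the alphabet Sigma is
   {1, ..., sigma} with the usual order of nat, so $ < every letter. *)
From mathcomp Require Import all_boot.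
Set Implicit Arguments.
Unset Strict Implicit.
Unset Printing Implicit Defensive.

Definition word := seq nat.
Definition dollar : nat := 0.

Fixpoint lexlt (u v : word) : bool :=
  match u, v with
  | _, [::] => false
  | [::], _ :: _ => true
  | a :: u', b :: v' => (a < b) || ((a == b) && lexlt u' v')
  end.
Definition lexle (u v : word) : bool := ~~ lexlt v u.

Definition primitive (w : word) : Prop :=
  forall (u : word) (e : nat), w = flatten (nseq e u) -> e <= 1.

Definition lyndon (w : word) : Prop :=
  w <> [::] /\ primitive w /\ forall i, 0 < i < size w -> lexlt w (rot i w).

Definition lyndon_factorization (W : word) (Ls : seq word) : Prop :=
  flatten Ls = W /\ (forall L, L \in Ls -> lyndon L) /\
  sorted (fun u v => lexle v u) Ls.

Definition suffix_array (X : word) : seq nat :=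
  sort (fun i j => lexle (drop i X) (drop j X)) (iota 0 (size X)).

(* for each suffix in sorted order, the symbol cyclically preceding it *)
Definition bwt (X : word) : word :=
  [seq nth dollar X ((i + size X).-1 %% size X) | i <- suffix_array X].

Definition Ccount (u : word) (x : nat) : nat := count (fun y => y < x) u.
Definition rank (u : word) (x t : nat) : nat := count (pred1 x) (take t u).

(* A computation returns its result together with the number of elementary
   steps it performed. *)
Definition Cost (A : Type) := (A * nat)%type.
Definition ret {A} (a : A) : Cost A := (a, 0).
Definition bind {A B} (m : Cost A) (f : A -> Cost B) : Cost B :=
  let (a, n) := m in let (b, n') := f a in (b, n + n').

Definition get (s : seq nat) (i : nat) : Cost nat := (nth 0 s i, 1).
Definition copy (s : seq nat) : Cost (seq nat) := (s, size s).
(* linear-time suffix sorting (black box, as in the paper): |X| steps *)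
Definition prim_sa (X : word) : Cost (seq nat) := (suffix_array X, size X).
(* building the C / rank structure on B: |B| steps *)
Definition prim_rank_build (B : word) : Cost unit := (tt, size B).
Definition qC (B : word) (a : nat) : Cost nat := (Ccount B a, 1).
Definition qrank (B : word) (a t : nat) : Cost nat := (rank B a t, 1).

Fixpoint mapM {A} (f : A -> Cost nat) (s : seq A) : Cost (seq nat) :=
  match s with
  | [::] => ret [::]
  | x :: s' => bind (f x) (fun y => bind (mapM f s') (fun ys => ret (y :: ys)))
  end.

Fixpoint mapM2 {A} (f : A -> Cost (nat * nat)) (s : seq A)
  : Cost (seq (nat * nat)) :=
  match s with
  | [::] => ret [::]
  | x :: s' => bind (f x) (fun y => bind (mapM2 f s') (fun ys => ret (y :: ys)))
  end.

(* counts B L = [:: c_0; ...; c_m] (m = |L|) where c_j is the number of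
   suffixes of P$ smaller than L[j..]$, computed by C and rank queries on
   B = bwt(P$) (backward search), from j = m down to 0. *)
Fixpoint counts (B : word) (L : word) : Cost (seq nat) :=
  match L with
  | [::] => ret [:: 0]
  | a :: L' =>
      bind (counts B L') (fun cs =>
      bind (qC B a) (fun ca =>
      bind (qrank B a (head 0 cs)) (fun r =>
      ret ((ca + r) :: cs))))
  end.

(* merging: rows = [:: (d, x); ...] gives, for each suffix of L$ in sorted
   order, the number d of (non-"$") rows of B preceding it and its bwt
   symbol x. *)
Fixpoint merge_rows (bt : word) (pos : nat) (rows : seq (nat * nat))
  : Cost word :=
  match rows with
  | [::] => copy bt
  | (d, x) :: rows' =>
      bind (copy (take (d - pos) bt)) (fun pre =>
      bind (merge_rows (drop (d - pos) bt) d rows') (fun rest =>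
      (pre ++ x :: rest, 1)))
  end.

(* Iteration: from B = bwt(P$) and the next Lyndon factor L, compute
   bwt(P L $). *)
Definition bwt_lynd_iter (B L : word) : Cost word :=
  let X := L ++ [:: dollar] in
  bind (prim_sa X) (fun saL =>
  bind (mapM (fun p => get X ((p + size X).-1 %% size X)) saL) (fun bwtL =>
  bind (prim_rank_build B) (fun _ =>
  bind (counts B L) (fun cs =>
  bind (get B 0) (fun b0 =>
  bind (mapM2 (fun px => bind (get cs px.1) (fun c =>
                          ret (c.-1, if px.1 == 0 then b0 else px.2)))
              (zip saL bwtL)) (fun rows =>
  merge_rows (behead B) 0 rows)))))).

(* Bwt_Lynd: starting from bwt($) = [:: $], run the k iterations; the
   trace lists, for each iteration i, its output and its running time. *)
Fixpoint bwt_lynd_run (B : word) (Ls : seq word) : seq (word * nat) :=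
  match Ls with
  | [::] => [::]
  | L :: Ls' => let r := bwt_lynd_iter B L in r :: bwt_lynd_run r.1 Ls'
  end.

Definition bwt_lynd (Ls : seq word) : seq (word * nat) :=
  bwt_lynd_run [:: dollar] Ls.

(* Write P = L_1 ... L_(i-1) and L = L_i, so that L is Lyndon and no larger
   than any factor of P.  Then L $ is smaller than every word (suffix of P) L $,
   hence appending L to P preserves the order between two suffixes of P, and
   a suffix of P compares with a suffix of L $ exactly as it does in P $.  So
   the suffix array of P L $ is the merge of those of P $ and L $, the suffix
   L[p..]$ being inserted after the suffixes of P $ smaller than it; these
   counts are obtained by backward search on bwt(P $) with C and rank.  The
   merge costs 6|L| + 2|P| + 6 <= 12 |L_1 ... L_i| steps, and summing over the
   k iterations gives O(k^2 M). *)

From mathcomp Require Import all_boot zify.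
Set Implicit Arguments. Unset Strict Implicit. Unset Printing Implicit Defensive.

Lemma lexlt_irr u : lexlt u u = false.
Proof. by elim: u => //= a u ->; rewrite ltnn eqxx. Qed.

Lemma lexlt_trans u v w : lexlt u v -> lexlt v w -> lexlt u w.
Proof.
elim: u v w => [|a u IH] [|b v] [|c w] //=.
case/orP=> [ab|/andP[/eqP<- uv]]; case/orP=> [bc|/andP[/eqP<- vw]].
- by rewrite (ltn_trans ab bc).
- by rewrite ab.
- by rewrite bc.
- by rewrite eqxx (IH _ _ uv vw) orbT.
Qed.

Lemma lexlt_asym u v : lexlt u v -> lexlt v u = false.
Proof. by move=> uv; apply/negP=> /(lexlt_trans uv); rewrite lexlt_irr. Qed.

Lemma lexlt_total u v : u != v -> lexlt u v || lexlt v u.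
Proof.
elim: u v => [|a u IH] [|b v] //=.
case: (ltngtP a b) => //= ab; rewrite eqseq_cons ab eqxx /= => /IH.
by rewrite orbC.
Qed.

Lemma lexle_eqVlt u v : lexle u v = (u == v) || lexlt u v.
Proof.
rewrite /lexle; case: (eqVneq u v) => [->|nuv] /=; first by rewrite lexlt_irr.
have := lexlt_total nuv; case h: (lexlt u v) => /=; first by rewrite lexlt_asym.
by move=> ->.
Qed.

Lemma lexltW u v : lexlt u v -> lexle u v.
Proof. by rewrite lexle_eqVlt => ->; rewrite orbT. Qed.

Lemma lexle_total u v : lexle u v || lexle v u.
Proof. by rewrite /lexle; case h: (lexlt v u); rewrite // lexlt_asym. Qed.

Lemma lexle_lt_trans u v w : lexle u v -> lexlt v w -> lexlt u w.
Proof. by rewrite lexle_eqVlt => /orP[/eqP->//|]; apply: lexlt_trans. Qed.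

Lemma lexlt_le_trans u v w : lexlt u v -> lexle v w -> lexlt u w.
Proof. by move=> uv; rewrite lexle_eqVlt => /orP[/eqP<-//|]; apply: lexlt_trans. Qed.

Lemma lexle_trans u v w : lexle u v -> lexle v w -> lexle u w.
Proof.
by rewrite [lexle u v]lexle_eqVlt => /orP[/eqP->//|uv] /(lexlt_le_trans uv)/lexltW.
Qed.

Lemma lexle_antisym u v : lexle u v -> lexle v u -> u = v.
Proof.
rewrite [lexle u v]lexle_eqVlt => /orP[/eqP//|uv].
by rewrite /lexle uv.
Qed.

Lemma lexlt_nilr u : lexlt u [::] = false.
Proof. by case: u. Qed.

Lemma lexlt_cat2l w u v : lexlt (w ++ u) (w ++ v) = lexlt u v.
Proof. by elim: w => //= a w ->; rewrite ltnn eqxx. Qed.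

Lemma lexlt_prefix u w : w != [::] -> lexlt u (u ++ w).
Proof. by move=> wn; rewrite -{1}(cats0 u) lexlt_cat2l; case: w wn. Qed.

Lemma lexlt_cat_mismatch a b x y :
  lexlt a b -> size b <= size a -> lexlt (a ++ x) (b ++ y).
Proof.
elim: a b => [|p a IH] [|q b] //=.
rewrite ltnS => /orP[->//|/andP[-> h]] sb; by rewrite (IH _ h sb) orbT.
Qed.

Lemma lexlt_cat_samesize x w a b : size x = size w ->
  lexlt (x ++ a) (w ++ b) = lexlt x w || ((x == w) && lexlt a b).
Proof.
elim: x w => [|p x IH] [|q w] //= [] /IH ->.
by rewrite eqseq_cons; case: (p < q); case: (p == q).
Qed.

Lemma lexlt_cat_prefixP a b y : lexlt a (b ++ y) -> size b < size a ->
  lexlt a b \/ exists w, a = b ++ w.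
Proof.
elim: a b => [|p a IH] [|q b] //=.
- by move=> _ _; right; exists (p :: a).
- rewrite ltnS => /orP[->|/andP[/eqP<- h]] sb; first by left.
  case: (IH _ h sb) => [->|[w ->]]; first by left; rewrite eqxx orbT.
  by right; exists w.
Qed.

Definition dollar_free (w : word) : bool := all (fun a => 0 < a) w.

Lemma dollar_free_cat x y : dollar_free (x ++ y) = dollar_free x && dollar_free y.
Proof. exact: all_cat. Qed.

Lemma dollar_free_flatten (Ls : seq word) :
  dollar_free (flatten Ls) = all dollar_free Ls.
Proof. by elim: Ls => //= L Ls IH; rewrite dollar_free_cat IH. Qed.

Lemma dollar_free_drop t x : dollar_free x -> dollar_free (drop t x).
Proof. by rewrite -{1}(cat_take_drop t x) dollar_free_cat => /andP[]. Qed.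

Lemma lexlt_dollar u : u != [::] -> lexlt u [:: 0] = false.
Proof. by case: u => //= a u _; rewrite lexlt_nilr andbF. Qed.

(* The hypotheses cover exactly the cases where one of [s], [v] is a prefix
   of the other; otherwise the first mismatch decides. *)
Lemma lexlt_cat_dollar s v z1 z2 :
  dollar_free s -> dollar_free v ->
  (forall w, w != [::] -> v = s ++ w -> lexlt z1 (w ++ z2)) ->
  (forall w, w != [::] -> s = v ++ w -> ~~ lexlt (w ++ z1) z2) ->
  (s = v -> ~~ lexlt z1 z2) ->
  lexlt (s ++ z1) (v ++ z2) = lexlt (s ++ [:: 0]) (v ++ [:: 0]).
Proof.
elim: s v => [|a s IH] [|b v] //=.
- by move=> _ _ _ _ /(_ erefl) /negbTE ->.
- by move=> _ /andP[b0 _] /(_ (b :: v) isT erefl) ->; rewrite b0.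
- move=> /andP[a0 _] _ _ /(_ (a :: s) isT erefl) /negbTE /= -> _.
  by rewrite lexlt_nilr andbF.
- move=> /andP[a0 zs] /andP[b0 zv] c1 c2 c3.
  case: (eqVneq a b) => [eab|]; last by rewrite !andFb.
  subst b; rewrite /=; congr (_ || _); apply: IH => //.
  + by move=> w wn ev; apply: c1 => //; rewrite ev.
  + by move=> w wn ev; apply: c2 => //; rewrite ev.
  + by move=> ev; apply: c3; rewrite ev.
Qed.

Lemma lexlt_dollar_cat L u b r : dollar_free L -> dollar_free u -> lexle L u ->
  (forall w, w != [::] -> L <> u ++ w) -> 0 < b ->
  lexlt (L ++ [:: 0]) (u ++ b :: r).
Proof.
move=> + + + + b0; elim: L u => [|a L IH] [|c u] /=.
- by rewrite b0.
- by move=> _ /andP[-> _].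
- by move=> _ _ _ /(_ (a :: L) isT).
- move=> /andP[a0 zL] /andP[c0 zu]; rewrite /lexle /= negb_or negb_and.
  case/andP=> ca h np.
  case: (ltngtP a c) => [//|ca2|eac]; first by rewrite ca2 in ca.
  subst c; rewrite /=; apply: IH => //; first by move: h; rewrite eqxx.
  by move=> w wn e; apply: (np w wn); rewrite e.
Qed.

Lemma drop_eq_cat (P s w : word) q : drop q P = s ++ w -> w != [::] ->
  w = drop (size s + q) P /\ size s + q < size P.
Proof.
move=> e wn; split; first by rewrite -drop_drop e drop_size_cat.
have : size (drop q P) = size s + size w by rewrite e size_cat.
rewrite size_drop; case: w wn {e} => //= a w _; lia.
Qed.

Lemma lyndon_lt_drop L t : lyndon L -> 0 < t < size L -> lexlt L (drop t L).
Proof.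
case=> _ [_ Hrot] /andP[t0 tL].
have := Hrot t; rewrite t0 tL /rot => /(_ isT) h.
have sz : size (drop t L) < size L by rewrite size_drop; lia.
case: (lexlt_cat_prefixP h sz) => // [[w ew]]; exfalso.
set u := drop t L in ew h sz; set x := take t L in h.
have Lxu : L = x ++ u by rewrite cat_take_drop.
have sx : size x = t by rewrite size_take tL.
have sw : size w = t.
  have : size L = size u + size w by rewrite {1}ew size_cat.
  rewrite /u size_drop; lia.
have wx : lexlt w x by move: h; rewrite {1}ew lexlt_cat2l.
have su : 0 < size u < size L by rewrite sz /u size_drop subn_gt0 tL.
have := Hrot (size u) su.
rewrite /rot {2 3}ew drop_size_cat // take_size_cat // {1}Lxu.
rewrite lexlt_cat_samesize ?sx ?sw // (lexlt_asym wx) => /andP[/eqP exw _].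
by move: wx; rewrite exw lexlt_irr.
Qed.

Lemma lyndon_lt_drop_dollar L t : lyndon L -> 0 < t < size L ->
  lexlt (L ++ [:: 0]) (drop t L ++ [:: 0]).
Proof.
move=> lL tL; apply: lexlt_cat_mismatch; first exact: lyndon_lt_drop.
by rewrite size_drop leq_subr.
Qed.

Section LyndonExtension.

Variable L : word.
Hypotheses (lyndon_L : lyndon L) (dollar_free_L : dollar_free L).

Definition below_factors (Lp : seq word) :=
  {in Lp, forall Lm, [/\ lyndon Lm, dollar_free Lm & lexle L Lm]}.

Lemma below_factors_dollar_free Lp :
  below_factors Lp -> dollar_free (flatten Lp).
Proof.
by move=> Lp_ge; rewrite dollar_free_flatten; apply/allP=> Lm /Lp_ge[].
Qed.

Lemma lyndon_dollar_lt_suffix Lp t :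
  below_factors Lp -> t < size (flatten Lp) ->
  lexlt (L ++ [:: 0]) (drop t (flatten Lp) ++ L ++ [:: 0]).
Proof.
elim: Lp t => [|Lm Lp IH] t Lp_ge //=.
have [lLm zLm leLm] := Lp_ge Lm (mem_head _ _).
have Lp_ge' : below_factors Lp by move=> Lm' h; apply: Lp_ge; rewrite inE h orbT.
rewrite size_cat drop_cat; case: ifP => [tLm _|tLm ts]; last first.
  by apply: IH => //; move: tLm ts; lia.
have le_drop : lexle L (drop t Lm).
  case: (posnP t) => [->|t0]; first by rewrite drop0.
  by apply/(lexle_trans leLm)/lexltW/lyndon_lt_drop; rewrite ?t0.
have [b [r [e b0]]] : exists b r, (flatten Lp ++ L) ++ [:: 0] = b :: r /\ 0 < b.
  have : dollar_free (flatten Lp ++ L).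
    by rewrite dollar_free_cat (below_factors_dollar_free Lp_ge').
  have : flatten Lp ++ L != [::] by case: (L) lyndon_L => [[]|]//; case: (flatten Lp).
  by case: (flatten Lp ++ L) => // b r _ /andP[b0 _]; exists b, (r ++ [:: 0]).
rewrite -catA [flatten Lp ++ _]catA e.
apply: lexlt_dollar_cat => //; first exact: dollar_free_drop.
by move=> w wn eL; move: le_drop; rewrite /lexle eL lexlt_prefix.
Qed.

Lemma lexlt_suffixes_extend Lp q q' :
  below_factors Lp -> q < size (flatten Lp) -> q' < size (flatten Lp) ->
  lexlt (drop q (flatten Lp) ++ L ++ [:: 0]) (drop q' (flatten Lp) ++ L ++ [:: 0]) =
  lexlt (drop q (flatten Lp) ++ [:: 0]) (drop q' (flatten Lp) ++ [:: 0]).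
Proof.
move=> Lp_ge qP q'P; have zP := below_factors_dollar_free Lp_ge.
apply: lexlt_cat_dollar; try exact: dollar_free_drop.
- move=> w wn e; have [-> h] := drop_eq_cat e wn.
  exact: lyndon_dollar_lt_suffix.
- move=> w wn e; have [ew h] := drop_eq_cat e wn.
  by rewrite lexlt_asym // ew; apply: lyndon_dollar_lt_suffix.
- by move=> _; rewrite lexlt_irr.
Qed.

Lemma lexlt_suffix_extend_new (P : word) q p :
  dollar_free P -> q < size P -> p <= size L ->
  lexlt (drop q P ++ L ++ [:: 0]) (drop p L ++ [:: 0]) =
  lexlt (drop q P ++ [:: 0]) (drop p L ++ [:: 0]).
Proof.
move=> zP qP pL; apply: lexlt_cat_dollar; try exact: dollar_free_drop.
- move=> w wn e; have [-> h] := drop_eq_cat e wn.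
  by apply: lyndon_lt_drop_dollar; rewrite // size_drop in h *; lia.
- by move=> w wn e; rewrite lexlt_dollar //; case: w wn e.
- by move=> _; rewrite lexlt_dollar //; case: (L) lyndon_L => [[]|].
Qed.

End LyndonExtension.

Definition suffix_le (Z : word) : rel nat := fun i j => lexle (drop i Z) (drop j Z).

Lemma suffix_le_trans Z : transitive (suffix_le Z).
Proof. by move=> y x z; apply: lexle_trans. Qed.

Lemma suffix_le_total Z : total (suffix_le Z).
Proof. by move=> x y; apply: lexle_total. Qed.

Lemma sorted_suffix_array Z : sorted (suffix_le Z) (suffix_array Z).
Proof. exact: (sort_sorted (suffix_le_total Z)). Qed.

Lemma pairwise_suffix_array Z : pairwise (suffix_le Z) (suffix_array Z).
Proof. by rewrite -sorted_pairwise ?sorted_suffix_array //; apply: suffix_le_trans. Qed.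

Lemma perm_suffix_array Z : perm_eq (suffix_array Z) (iota 0 (size Z)).
Proof. by rewrite /suffix_array perm_sort. Qed.

Lemma size_suffix_array Z : size (suffix_array Z) = size Z.
Proof. by rewrite (perm_size (perm_suffix_array Z)) size_iota. Qed.

Lemma mem_suffix_array Z p : (p \in suffix_array Z) = (p < size Z).
Proof. by rewrite (perm_mem (perm_suffix_array Z)) mem_iota. Qed.

Lemma suffix_arrayP Z s : pairwise (suffix_le Z) s -> perm_eq s (iota 0 (size Z)) ->
  s = suffix_array Z.
Proof.
move=> ss ps; apply: (@sorted_eq_in _ (suffix_le Z)).
- by move=> x y z _ _ _; apply: suffix_le_trans.
- move=> i j; rewrite !(perm_mem ps) !mem_iota /= => ib jb /andP[h1 h2].
  by have := congr1 size (lexle_antisym h1 h2); rewrite !size_drop; lia.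
- by rewrite sorted_pairwise //; apply: suffix_le_trans.
- exact: sorted_suffix_array.
- by rewrite (permPl ps) perm_sym perm_suffix_array.
Qed.

Lemma size_rcons0 (P : word) : size (P ++ [:: 0]) = (size P).+1.
Proof. by rewrite size_cat addn1. Qed.

Lemma suffix_array_dollar (P : word) : dollar_free P ->
  suffix_array (P ++ [:: 0]) = size P :: sort (suffix_le (P ++ [:: 0])) (iota 0 (size P)).
Proof.
move=> zP; symmetry; apply: suffix_arrayP.
- have sorted_A := sort_sorted (suffix_le_total (P ++ [:: 0])) (iota 0 (size P)).
  rewrite pairwise_cons -sorted_pairwise ?sorted_A ?andbT; last exact: suffix_le_trans.
  apply/allP => i; rewrite mem_sort mem_iota /= => iP.
  rewrite /suffix_le drop_size_cat // /lexle lexlt_dollar //.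
  by rewrite -size_eq0 size_drop size_rcons0; lia.
- rewrite size_rcons0 -addn1 iotaD /= perm_sym perm_catC /= perm_cons.
  by rewrite perm_sym perm_sort.
Qed.

Definition prev_sym (Z : word) i := nth dollar Z ((i + size Z).-1 %% size Z).

Lemma bwtE Z : bwt Z = map (prev_sym Z) (suffix_array Z).
Proof. by []. Qed.

Lemma prev_symE (Z : word) i : i < size Z ->
  prev_sym Z i = if i == 0 then nth 0 Z (size Z).-1 else nth 0 Z i.-1.
Proof.
rewrite /prev_sym; case: i => [|i] iZ /=.
- by rewrite add0n modn_small //; lia.
- by rewrite modnDr modn_small //; lia.
Qed.

Lemma nth_last_dollar (Y : word) : nth 0 (Y ++ [:: 0]) (size (Y ++ [:: 0])).-1 = 0.
Proof. by rewrite size_rcons0 /= nth_cat ltnn subnn. Qed.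

Lemma count_prev_sym_dollar (P : word) (h : nat -> nat -> bool) :
  count (fun i => h i (prev_sym (P ++ [:: 0]) i)) (iota 0 (size (P ++ [:: 0]))) =
  h 0 0 + count (fun j => h j.+1 (nth 0 P j)) (iota 0 (size P)).
Proof.
rewrite size_rcons0 /= prev_symE ?size_rcons0 // -size_rcons0 nth_last_dollar.
have -> : iota 1 (size P) = map (addn 1) (iota 0 (size P)) by rewrite -iotaDl.
congr (_ + _); rewrite count_map; apply: eq_in_count => j.
rewrite mem_iota /= add1n => jP.
by rewrite prev_symE /= ?size_rcons0 ?ltnS // nth_cat jP.
Qed.

Lemma mem_take_pred (T : eqType) (s : seq T) x c b :
  b \in take c.-1 s -> b \in take c (x :: s).
Proof. by case: c => [|c] /=; rewrite ?take0 // inE => ->; rewrite orbT. Qed.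

Lemma mem_drop_pred (T : eqType) (s : seq T) x c b :
  b \in drop c.-1 s -> b \in drop c (x :: s).
Proof. by case: c => [|c] //=; rewrite drop0 inE => ->; rewrite orbT. Qed.

Lemma take_count_pairwise (T : eqType) (r : rel T) (p : pred T) s :
  pairwise r s -> (forall x y, r x y -> p y -> p x) ->
  take (count p s) s = filter p s /\ drop (count p s) s = filter (predC p) s.
Proof.
move=> + dc; elim: s => //= x s IH /andP[ax /IH[tk dp]].
case px: (p x) => /=; first by rewrite tk dp.
have np : {in s, forall y, p y = false}.
  by move=> y ys; apply/negP => /(dc _ _ (allP ax y ys)); rewrite px.
have /all_filterP -> : all (predC p) s by apply/allP => y /np /= ->.
by rewrite (eq_in_filter np) filter_pred0 (eq_in_count np) count_pred0 take0 drop0.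
Qed.

Definition nsmaller (Z v : word) : nat :=
  count (fun i => lexlt (drop i Z) v) (iota 0 (size Z)).

Lemma nsmaller_suffix_array Z v :
  nsmaller Z v = count (fun i => lexlt (drop i Z) v) (suffix_array Z).
Proof. by apply/esym/permP; apply: perm_suffix_array. Qed.

Lemma nsmaller_dollar (P : word) : nsmaller (P ++ [:: 0]) [:: 0] = 0.
Proof.
apply/eqP; rewrite -leqn0 leqNgt -has_count; apply/hasPn => i.
rewrite mem_iota /= => iQ; rewrite lexlt_dollar //.
by rewrite -size_eq0 size_drop subn_eq0 -ltnNge.
Qed.

(* One step of backward search: the suffixes of [P $] smaller than [a v] are
   those starting with a letter [< a], plus those [a w] with [w < v]; the
   latter are counted by [rank] since the suffixes [w < v] form a prefix of
   the suffix array. *)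
Lemma nsmaller_cons (P : word) a v : dollar_free P -> 0 < a ->
  let Q := P ++ [:: 0] in
  nsmaller Q (a :: v) = Ccount (bwt Q) a + rank (bwt Q) a (nsmaller Q v).
Proof.
move=> zP a0 Q.
have rankE : rank (bwt Q) a (nsmaller Q v) =
    count (fun j => (nth 0 P j == a) && lexlt (drop j.+1 Q) v) (iota 0 (size P)).
  rewrite /rank bwtE -map_take nsmaller_suffix_array.
  have [-> _] := take_count_pairwise (pairwise_suffix_array Q)
                   (fun x y => @lexle_lt_trans (drop x Q) (drop y Q) v).
  rewrite count_map count_filter (permP (perm_suffix_array Q)).
  rewrite (count_prev_sym_dollar P (fun i c => (c == a) && lexlt (drop i Q) v)) /=.
  by rewrite eq_sym (gtn_eqF a0).
have CcountE : Ccount (bwt Q) a = count (fun j => nth 0 P j < a) (iota 0 (size P)) + 1.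
  rewrite /Ccount bwtE count_map (permP (perm_suffix_array Q)).
  by rewrite (count_prev_sym_dollar P (fun i c => c < a)) /= a0 addnC.
rewrite rankE CcountE /nsmaller size_rcons0 -addn1 iotaD count_cat /=.
rewrite add0n drop_size_cat //= a0 /= addn0 addnAC.
rewrite -(count_predUI (fun j => nth 0 P j < a)).
have -> : count (predI (fun j => nth 0 P j < a)
            (fun j => (nth 0 P j == a) && lexlt (drop j.+1 Q) v)) (iota 0 (size P)) = 0.
  by apply/eqP; rewrite -leqn0 leqNgt -has_count; apply/hasPn => j _ /=; case: ltngtP.
rewrite addn0; congr (_ + 1); apply: eq_in_count => j.
rewrite mem_iota add0n /= => jP; have jQ : j < size Q by rewrite size_rcons0 ltnW.
by rewrite (drop_nth 0 jQ) /= /Q nth_cat jP.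
Qed.

Lemma bindE A B (m : Cost A) (f : A -> Cost B) :
  bind m f = ((f m.1).1, m.2 + (f m.1).2).
Proof. by case: m => a n /=; case: (f a). Qed.

Lemma mapME A (f : A -> Cost nat) s :
  (forall x, (f x).2 = 1) -> mapM f s = (map (fun x => (f x).1) s, size s).
Proof. by move=> f1; elim: s => //= x s IH; rewrite bindE IH /= f1 addn0 add1n. Qed.

Lemma mapM2E A (f : A -> Cost (nat * nat)) s :
  (forall x, (f x).2 = 1) -> mapM2 f s = (map (fun x => (f x).1) s, size s).
Proof. by move=> f1; elim: s => //= x s IH; rewrite bindE IH /= f1 addn0 add1n. Qed.

Lemma countsE (P L : word) : dollar_free P -> dollar_free L ->
  counts (bwt (P ++ [:: 0])) L =
  ([seq nsmaller (P ++ [:: 0]) (drop j L ++ [:: 0]) | j <- iota 0 (size L).+1],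
   2 * size L).
Proof.
move=> zP; elim: L => [|a L IH]; first by rewrite /= nsmaller_dollar.
case/andP=> a0 /IH {}IH.
have -> : iota 0 (size (a :: L)).+1 = 0 :: map (addn 1) (iota 0 (size L).+1).
  by rewrite /= -iotaDl.
rewrite [counts _ _]/= bindE IH /= -map_comp drop0 -nsmaller_cons //.
congr (_, _); lia.
Qed.

Fixpoint merge_blocks T (bt : seq T) (pos : nat) (rows : seq (nat * T)) : seq T :=
  match rows with
  | [::] => bt
  | (d, x) :: rows' =>
      take (d - pos) bt ++ x :: merge_blocks (drop (d - pos) bt) d rows'
  end.

Lemma merge_rowsE bt pos rows :
  merge_rows bt pos rows = (merge_blocks bt pos rows, size bt + size rows).
Proof.
elim: rows bt pos => [|[d x] rows IH] bt pos /=; first by rewrite addn0.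
rewrite /copy bindE IH /=; congr (_, _).
by rewrite size_take size_drop; case: ltnP; lia.
Qed.

Lemma map_merge_blocks T U (f : T -> U) bt pos rows :
  map f (merge_blocks bt pos rows) =
  merge_blocks (map f bt) pos [seq (r.1, f r.2) | r <- rows].
Proof.
elim: rows bt pos => [|[d x] rows IH] bt pos //=.
by rewrite map_cat /= IH map_take map_drop.
Qed.

Lemma perm_merge_blocks (T : eqType) (bt : seq T) pos rows :
  perm_eq (merge_blocks bt pos rows) (bt ++ map snd rows).
Proof.
elim: rows bt pos => [|[d x] rows IH] bt pos /=; first by rewrite cats0.
rewrite -[X in perm_eq _ (X ++ _)](cat_take_drop (d - pos) bt) -catA perm_cat2l.
apply: (@perm_trans _ (x :: (drop (d - pos) bt ++ map snd rows))).
  by rewrite perm_cons IH.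
by rewrite -cat1s perm_catCA.
Qed.

Lemma pairwise_merge_blocks (T : eqType) (r : rel T) bt pos rows :
  pairwise r bt -> pairwise r (map snd rows) ->
  pairwise (fun u v => u.1 <= v.1) rows -> all (fun u => pos <= u.1) rows ->
  {in rows, forall u,
     {in take (u.1 - pos) bt, forall b, r b u.2} /\
     {in drop (u.1 - pos) bt, forall b, r u.2 b}} ->
  pairwise r (merge_blocks bt pos rows).
Proof.
elim: rows bt pos => [|[d x] rows IH] bt pos //=.
move=> rbt /andP[rx rrows] /andP[led lerows] /andP[pd prows] fits.
have [fitl fitr] := fits _ (mem_head _ _); rewrite /= in fitl fitr.
set k := d - pos in fitl fitr *.
have fits' u : u \in rows ->
    {in take (u.1 - pos) bt, forall b, r b u.2} /\
    {in drop (u.1 - pos) bt, forall b, r u.2 b}.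
  by move=> ur; apply: fits; rewrite inE ur orbT.
have := rbt; rewrite -{1}(cat_take_drop k bt) pairwise_cat => /and3P[rtd rtk rdk].
have rrest : pairwise r (merge_blocks (drop k bt) d rows).
  apply: IH => // u ur; have [fl fr] := fits' u ur.
  have du : d <= u.1 := allP led u ur.
  have split_u : u.1 - pos = k + (u.1 - d) by rewrite /k addnBAC // subnKC.
  split=> b bin; [apply: fl | apply: fr].
  - by rewrite split_u takeD mem_cat bin orbT.
  - by move: bin; rewrite drop_drop addnC -split_u.
rewrite pairwise_cat rtk /= rrest andbT; apply/andP; split.
- apply/allrelP => b y bk; rewrite inE => /orP[/eqP->|]; first exact: fitl.
  rewrite (perm_mem (perm_merge_blocks _ _ _)) mem_cat => /orP[|/mapP[u ur ->]].
  + exact: (allrelP rtd).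
  + have [fl _] := fits' u ur; apply: fl.
    have ku : k <= u.1 - pos := leq_sub2r pos (allP led u ur).
    by move: bk; rewrite -(subnKC ku) takeD mem_cat => ->.
- rewrite (perm_all _ (perm_merge_blocks _ _ _)) all_cat rx andbT.
  by apply/allP => b /fitr.
Qed.

Lemma bwt_lynd_iterE (B L : word) :
  let X := L ++ [:: dollar] in
  bwt_lynd_iter B L =
  (merge_blocks (behead B) 0
     [seq ((nth 0 (counts B L).1 p).-1, if p == 0 then nth 0 B 0 else prev_sym X p)
     | p <- suffix_array X],
   4 * size X + size B + (size B).-1 + (counts B L).2 + 1).
Proof.
move=> X; rewrite /bwt_lynd_iter -/X !bindE /= mapME //.
case: (counts B L) => cs c /=; rewrite mapM2E //.
rewrite -[Y in zip Y _]map_id zip_map -map_comp merge_rowsE /= size_behead.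
by rewrite !size_map size_suffix_array; congr (_, _); lia.
Qed.

Section Iteration.

Variables (Lp : seq word) (L : word).
Hypotheses (lyndon_L : lyndon L) (dollar_free_L : dollar_free L)
  (Lp_ge : below_factors L Lp).

Local Notation P := (flatten Lp).
Local Notation n := (size P).
Local Notation Q := (P ++ [:: 0]).
Local Notation X := (L ++ [:: 0]).
Local Notation T := (P ++ X).
Local Notation A := (sort (suffix_le Q) (iota 0 n)).

(* Position in the merged bwt after which the suffix [p] of [L $] goes: the
   number of suffixes of [P $] smaller than it, not counting [$] itself. *)
Definition merge_pos p := (nsmaller Q (drop p X)).-1.

Let dollar_free_P : dollar_free P := below_factors_dollar_free Lp_ge.

Lemma mem_A b : (b \in A) = (b < n).
Proof. by rewrite mem_sort mem_iota. Qed.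

Lemma drop_T_old b : b < n -> drop b T = drop b P ++ X.
Proof. by move=> bn; rewrite drop_cat bn. Qed.

Lemma drop_T_new p : drop (n + p) T = drop p X.
Proof. by rewrite drop_cat ltnNge leq_addr /= addKn. Qed.

Lemma drop_Q b : b < n -> drop b Q = drop b P ++ [:: 0].
Proof. by move=> bn; rewrite drop_cat bn. Qed.

Lemma drop_X p : p <= size L -> drop p X = drop p L ++ [:: 0].
Proof. by rewrite drop_cat leq_eqVlt => /orP[/eqP->|->]; rewrite ?ltnn ?subnn ?drop_size. Qed.

Lemma mem_suffix_array_X p : p \in suffix_array X -> p <= size L.
Proof. by rewrite mem_suffix_array size_rcons0. Qed.

Lemma suffix_le_T_old b b' : b < n -> b' < n -> suffix_le T b b' = suffix_le Q b b'.
Proof.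
by move=> bn b'n; rewrite /suffix_le /lexle !drop_T_old // !drop_Q // lexlt_suffixes_extend.
Qed.

Lemma lexlt_T_cross b p : b < n -> p <= size L ->
  lexlt (drop b T) (drop (n + p) T) = lexlt (drop b Q) (drop p X).
Proof.
move=> bn pL; rewrite drop_T_old // drop_T_new drop_Q // drop_X //.
exact: lexlt_suffix_extend_new.
Qed.

Lemma suffix_array_extend :
  suffix_array T = merge_blocks A 0 [seq (merge_pos p, n + p) | p <- suffix_array X].
Proof.
have pwQ : pairwise (suffix_le Q) (n :: A).
  by rewrite -suffix_array_dollar // pairwise_suffix_array.
symmetry; apply: suffix_arrayP; last first.
  apply: (perm_trans (perm_merge_blocks _ _ _)).
  rewrite -map_comp size_cat iotaD add0n; apply: perm_cat; first by rewrite perm_sort.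
  by rewrite -[n]addn0 iotaDl addn0 perm_map // perm_suffix_array.
apply: pairwise_merge_blocks => //.
- move: pwQ; rewrite pairwise_cons => /andP[_].
  apply: (sub_in_pairwise _ (allss A)) => b b'.
  by rewrite !mem_A => bn b'n; rewrite suffix_le_T_old.
- rewrite -map_comp pairwise_map; apply: sub_pairwise (pairwise_suffix_array X) => p q.
  by rewrite /= /suffix_le !drop_T_new.
- rewrite pairwise_map; apply: sub_pairwise (pairwise_suffix_array X) => p q pq.
  suff : nsmaller Q (drop p X) <= nsmaller Q (drop q X) by rewrite /= /merge_pos; lia.
  by apply: sub_count => i /= /lexlt_le_trans; apply.
- by apply/allP.
move=> _ /mapP[p /mem_suffix_array_X pL ->] /=; rewrite subn0.
have lt_closed x y : suffix_le Q x y ->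
    lexlt (drop y Q) (drop p X) -> lexlt (drop x Q) (drop p X).
  exact: lexle_lt_trans.
have [tk dp] := take_count_pairwise pwQ lt_closed.
have cE : count (fun i => lexlt (drop i Q) (drop p X)) (n :: A) = nsmaller Q (drop p X).
  by rewrite -suffix_array_dollar // nsmaller_suffix_array.
rewrite cE in tk dp; split=> b.
- move=> btk; have bn : b < n by rewrite -mem_A (mem_take btk).
  have : b \in take (nsmaller Q (drop p X)) (n :: A) by apply: mem_take_pred.
  rewrite tk mem_filter -(lexlt_T_cross bn pL) => /andP[lt_b _].
  exact: lexltW.
- move=> bdp; have bn : b < n by rewrite -mem_A (mem_drop bdp).
  have : b \in drop (nsmaller Q (drop p X)) (n :: A) by apply: mem_drop_pred.
  by rewrite dp mem_filter /= -(lexlt_T_cross bn pL) => /andP[].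
Qed.

Lemma size_T : size T = n + (size L).+1.
Proof. by rewrite size_cat size_rcons0. Qed.

Lemma prev_sym_T_old b : b < n -> prev_sym T b = prev_sym Q b.
Proof.
move=> bn; have bT : b < size T by rewrite size_T ltn_addr.
have bQ : b < size Q by rewrite size_rcons0 ltnS ltnW.
rewrite (prev_symE bT) (prev_symE bQ); case: (b == 0).
  by rewrite catA !nth_last_dollar.
by rewrite !nth_cat (_ : b.-1 < n) //; lia.
Qed.

Lemma prev_sym_T_new p : p <= size L ->
  prev_sym T (n + p) = if p == 0 then prev_sym Q n else prev_sym X p.
Proof.
move=> pL; have pT : n + p < size T by rewrite size_T ltn_add2l ltnS.
rewrite (prev_symE pT); case: (posnP p) => [->|p0].
  have nQ : n < size Q by rewrite size_rcons0.
  rewrite addn0 (prev_symE nQ); case: (posnP n) => [n0|n0].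
    by rewrite catA !nth_last_dollar.
  by rewrite !nth_cat (_ : n.-1 < n) //; lia.
rewrite prev_symE ?size_rcons0 ?ltnS // (gtn_eqF p0) (_ : (n + p == 0) = false); last lia.
rewrite nth_cat (_ : (n + p).-1 < n = false); last lia.
by rewrite (_ : (n + p).-1 - n = p.-1) //; lia.
Qed.

Lemma bwt_extend :
  bwt T = merge_blocks (behead (bwt Q)) 0
    [seq (merge_pos p, if p == 0 then nth 0 (bwt Q) 0 else prev_sym X p)
    | p <- suffix_array X].
Proof.
have bwtQ : bwt Q = prev_sym Q n :: map (prev_sym Q) A.
  by rewrite bwtE suffix_array_dollar.
rewrite bwtE suffix_array_extend map_merge_blocks bwtQ /= -map_comp.
congr merge_blocks.
  by apply/eq_in_map => b; rewrite mem_A => /prev_sym_T_old.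
by apply/eq_in_map => p /mem_suffix_array_X pL /=; rewrite prev_sym_T_new.
Qed.

Lemma bwt_lynd_iter_extend :
  bwt_lynd_iter (bwt Q) L = (bwt T, 6 * size L + 2 * n + 6).
Proof.
rewrite bwt_lynd_iterE (countsE dollar_free_P dollar_free_L) bwt_extend /=.
congr (_, _).
  congr merge_blocks; apply/eq_in_map => p /mem_suffix_array_X pL /=.
  rewrite /merge_pos drop_X //; case: p pL => [|p] pL //=.
  by rewrite (nth_map 0) ?size_iota // nth_iota.
by rewrite bwtE size_map size_suffix_array !size_rcons0; lia.
Qed.

End Iteration.

Lemma bwt_lynd_runE (Lp Ls : seq word) :
  {in Lp ++ Ls, forall L, lyndon L /\ dollar_free L} ->
  pairwise (fun u v => lexle v u) (Lp ++ Ls) ->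
  let tr := bwt_lynd_run (bwt (flatten Lp ++ [:: 0])) Ls in
  size tr = size Ls /\
  forall i, i < size Ls -> nth ([::], 0) tr i =
    (bwt (flatten (Lp ++ take i.+1 Ls) ++ [:: 0]),
     6 * size (nth [::] Ls i) + 2 * size (flatten (Lp ++ take i Ls)) + 6).
Proof.
elim: Ls Lp => [|L Ls IH] Lp lyndon_Ls sorted_Ls //=.
have [lL zL] : lyndon L /\ dollar_free L by apply: lyndon_Ls; rewrite mem_cat inE eqxx orbT.
have Lp_ge : below_factors L Lp.
  move=> Lm Lmin; have [lLm zLm] := lyndon_Ls Lm (ltac:(by rewrite mem_cat Lmin)).
  move: sorted_Ls; rewrite pairwise_cat => /and3P[/allrelP le_Lp _ _].
  by split=> //; apply: le_Lp; rewrite ?inE ?eqxx.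
have catL : flatten Lp ++ L ++ [:: 0] = flatten (Lp ++ [:: L]) ++ [:: 0].
  by rewrite flatten_cat /= cats0 catA.
rewrite bwt_lynd_iter_extend //= catL.
have [IH1 IH2] := IH (Lp ++ [:: L]) (ltac:(by move=> x; rewrite -catA; apply: lyndon_Ls))
                    (ltac:(by rewrite -catA)).
split=> [|[|i]]; rewrite ?IH1 //=; first by rewrite take0 !cats0.
by rewrite ltnS => iLs; rewrite IH2 // -!catA.
Qed.

Lemma sumn_le_mul (s : seq nat) b : all (leq^~ b) s -> sumn s <= size s * b.
Proof. by elim: s => //= x s IH /andP[xb /IH]; rewrite mulSn; apply: leq_add. Qed.

Lemma size_flatten_le_max (Ls : seq word) :
  size (flatten Ls) <= size Ls * \max_(L <- Ls) size L.
Proof.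
elim: Ls => [|L Ls IH] //=; rewrite big_cons size_cat mulSn leq_add ?leq_maxl //.
by apply: (leq_trans IH); rewrite leq_mul2l leq_maxr orbT.
Qed.

Lemma lyndon_factorizationE W Ls : lyndon_factorization W Ls -> dollar_free W ->
  {in Ls, forall L, lyndon L /\ dollar_free L} /\
  pairwise (fun u v => lexle v u) Ls.
Proof.
case=> [eW [lyndon_Ls sorted_Ls]] zW; split.
  move=> L Lin; split; first exact: lyndon_Ls.
  by move: zW; rewrite -eW dollar_free_flatten => /allP; apply.
by rewrite -sorted_pairwise // => y x z h1 h2; apply: lexle_trans h2 h1.
Qed.

Lemma bwt_lynd_nth (Ls : seq word) :
  {in Ls, forall L, lyndon L /\ dollar_free L} -> pairwise (fun u v => lexle v u) Ls ->
  size (bwt_lynd Ls) = size Ls /\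
  forall i, i < size Ls ->
    (nth ([::], 0) (bwt_lynd Ls) i).1 = bwt (flatten (take i.+1 Ls) ++ [:: 0]) /\
    (nth ([::], 0) (bwt_lynd Ls) i).2 <= 12 * size (flatten (take i.+1 Ls)).
Proof.
move=> lyndon_Ls sorted_Ls.
have [size_tr trE] := @bwt_lynd_runE [::] Ls lyndon_Ls sorted_Ls.
split=> // i iLs; rewrite [nth _ _ _]trE //=; split=> //.
rewrite (take_nth [::] iLs) -cats1 flatten_cat size_cat /= cats0.
have : 0 < size (nth [::] Ls i).
  by have [[+ _] _] := lyndon_Ls _ (mem_nth [::] iLs); case: (nth _ _ _).
by move: (size (nth _ _ _)) (size (flatten (take i Ls))) => a b; lia.
Qed.

Theorem proposition3 :
  forall sigma : nat, exists c : nat,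
  forall (W : word) (Ls : seq word),
    W <> [::] ->
    all (fun a => 0 < a <= sigma) W ->
    lyndon_factorization W Ls ->
    let k := size Ls in
    let M := \max_(L <- Ls) size L in
    let tr := bwt_lynd Ls in
    size tr = k /\
    (* iteration i (0-based here) computes bwt(L_1 ... L_(i+1) $) and runs in
       time O(|L_1| + ... + |L_(i+1)|) *)
    (forall i, i < k ->
       (nth ([::], 0) tr i).1 = bwt (flatten (take i.+1 Ls) ++ [:: dollar]) /\
       (nth ([::], 0) tr i).2 <= c * sumn (map size (take i.+1 Ls))) /\
    (last ([:: dollar], 0) tr).1 = bwt (W ++ [:: dollar]) /\
    sumn (map snd tr) <= c * (k ^ 2 * M).
Proof.
move=> sigma; exists 12 => W Ls Wn Wa fact k M tr.
have zW : dollar_free W by apply/allP => a /(allP Wa) /andP[].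
have [eW _] := fact; have [Ls_lyndon Ls_sorted] := lyndon_factorizationE fact zW.
have [size_tr iter] := bwt_lynd_nth Ls_lyndon Ls_sorted.
have k0 : 0 < k by rewrite /k; case: (Ls) eW Wn => //= ->.
split=> //; split=> [i /iter|]; first by rewrite size_flatten.
split.
  rewrite -nth_last size_tr (set_nth_default ([::], 0)) ?size_tr ?prednK //.
  by have [-> _] := iter k.-1 (ltac:(by rewrite prednK)); rewrite prednK // take_size eW.
apply: (@leq_trans (size tr * (12 * size W))).
  rewrite -(size_map snd); apply: sumn_le_mul; apply/(all_nthP 0) => i.
  rewrite size_map size_tr => ik; rewrite (nth_map ([::], 0)) ?size_tr //.
  apply: (leq_trans (proj2 (iter i ik))); rewrite leq_mul2l -eW.
  by rewrite -[X in _ <= size (flatten X)](cat_take_drop i.+1) flatten_cat size_cat leq_addr.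
rewrite size_tr mulnCA leq_mul2l expnS expn1 -mulnA leq_mul //.
by rewrite -eW size_flatten_le_max.
Qed.
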